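(* For every $n\ge4$, the poset $(\mathcal{G}_{\mathsf{cwvg}}(n),\preceq_{\mathsf{MWC}})$ is not a tree; that is, there is a game in $\mathcal{G}_{\mathsf{cwvg}}(n)$ that covers at least two distinct games in this poset.
   Context: Let $N=\{1,\dots,n\}$. A simple game is a function $v:2^N\to\{0,1\}$ (all-losing allowed); a minimal winning coalition is a winning coalition $S$ with $S\setminus\{i\}$ losing for all $i\in S$; $W_{\min,G}$ denotes the set of minimal winning coalitions of $G$. A weighted voting game is a simple game with $q\ge0$, $w_i\ge0$ and $v(S)=1\iff\sum_{i\in S}w_i\ge q$. Write $i\succeq j$ if $v(S\cup\{i\})\ge v(S\cup\{j\})$ for all $S\subseteq N\setminus\{i,j\}$. $\mathcal{G}_{\mathsf{cwvg}}(n)$ is the set of weighted voting games on $N$ with $1\succeq2\succeq\cdots\succeq n$. For $G,G'\in\mathcal{G}_{\mathsf{cwvg}}(n)$, $G\preceq_{\mathsf{MWC}}G'$ iff there is a sequence $G=G_1,\dots,G_k=G'$ ($k\ge1$) in $\mathcal{G}_{\mathsf{cwvg}}(n)$ with $W_{\min,G_i}\subset W_{\min,G_{i+1}}$ and $|W_{\min,G_{i+1}}|=|W_{\min,G_i}|+1$ for all $i<k$. $y$ covers $x$ if $x\preceq y$, $x\ne y$ and no $z\notin\{x,y\}$ satisfies $x\preceq z\preceq y$. The poset (which has a least element) is called a tree if its Hasse diagram is a tree, i.e., every element covers at most one element. *)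

(* Players N = {1,..,n} are represented by 'I_n = {0,..,n-1}
   (player k+1 of the paper is the ordinal k). *)
From HB Require Import structures.
From mathcomp Require Import all_boot all_order all_algebra.
Set Implicit Arguments. Unset Strict Implicit. Unset Printing Implicit Defensive.
Import Order.TTheory GRing.Theory Num.Theory.
Local Open Scope ring_scope.

(* A simple game v : 2^N -> {0,1} (all-losing allowed), as a finite function. *)
Definition game (n : nat) := {ffun {set 'I_n} -> bool}.

Definition Wmin (n : nat) (G : game n) : {set {set 'I_n}} :=
  [set S | G S && [forall i in S, ~~ G (S :\ i)]].

Definition weighted (R : realFieldType) (n : nat) (G : game n) : Prop :=
  exists (q : R) (w : 'I_n -> R),
    0 <= q /\ (forall i, 0 <= w i) /\
    (forall S : {set 'I_n}, G S = (q <= \sum_(i in S) w i)).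

(* Desirability relation i >= j: v(S+i) >= v(S+j) for 0/1 values, i.e. v(S+j) -> v(S+i). *)
Definition desir (n : nat) (G : game n) (i j : 'I_n) : Prop :=
  forall S : {set 'I_n}, i \notin S -> j \notin S ->
    (G (j |: S) ==> G (i |: S)).

Definition cwvg (R : realFieldType) (n : nat) (G : game n) : Prop :=
  weighted R G /\ (forall i j : 'I_n, nat_of_ord j = i.+1 -> desir G i j).

Definition mwc_step (n : nat) (G G' : game n) : Prop :=
  Wmin G \proper Wmin G' /\ #|Wmin G'| = #|Wmin G|.+1.

Inductive leMWC (R : realFieldType) (n : nat) (G : game n) : game n -> Prop :=
  | leMWC_refl : cwvg R G -> leMWC R G G
  | leMWC_step : forall H H', leMWC R G H -> cwvg R H' -> mwc_step H H' ->
                 leMWC R G H'.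

Definition covers (R : realFieldType) (n : nat) (x y : game n) : Prop :=
  leMWC R x y /\ x <> y /\
  ~ (exists z, z <> x /\ z <> y /\ leMWC R x z /\ leMWC R z y).

From mathcomp Require Import all_boot all_order all_algebra.
Set Implicit Arguments. Unset Strict Implicit. Unset Printing Implicit Defensive.
Import GRing.Theory Num.Theory.

(* Take the weighted games (quota; weights of players 1..4, all other players
   having weight 0 and hence being null)
     G = [3; 2,1,1,1],   x1 = [4; 3,1,1,1],   x2 = [5; 3,2,2,1].
   All three have 1 >= 2 >= 3 >= 4 >= ... , and their minimal winning coalitions are
     x1 : {1,2} {1,3} {1,4}
     x2 : {1,2} {1,3} {2,3,4}
     G  : {1,2} {1,3} {1,4} {2,3,4},
   so each x_i reaches G in one step of the MWC order.  Since every step adds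
   exactly one minimal winning coalition, no game lies strictly between x_i
   and G, so G covers both x1 and x2. *)

Section Covering.
Variables (R : realFieldType) (n : nat).

Lemma leMWC_card (x y : game n) :
  leMWC R x y -> x = y \/ #|Wmin x| < #|Wmin y|.
Proof.
elim=> [_|H H' _ IH _ [_ ->]]; first by left.
by right; case: IH => [->|/ltnW]; rewrite ltnS.
Qed.

Lemma covers_of_mwc_step (x y : game n) :
  cwvg R x -> cwvg R y -> mwc_step x y -> covers R x y.
Proof.
move=> cx cy xy; have [_ card_y] := xy.
split; first exact: leMWC_step (leMWC_refl cx) cy xy.
split=> [xy_eq|[z [zx [zy [/leMWC_card xz /leMWC_card zy']]]]].
  by move: card_y; rewrite xy_eq; apply: n_Sn.
case: xz zy' => [/esym//|lt_xz] [//|lt_zy].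
by move: lt_zy; rewrite card_y ltnS leqNgt lt_xz.
Qed.

End Covering.

Lemma mwc_step_setU1 n (x y : game n) S :
  S \notin Wmin x -> Wmin y = S |: Wmin x -> mwc_step x y.
Proof.
rewrite /mwc_step => Sx ->; split; last by rewrite cardsU1 Sx.
by rewrite properEcard subsetU1 cardsU1 Sx ltnSn.
Qed.

Lemma Wmin_sub_support n (G : game n) (P S : {set 'I_n}) :
  (forall T, G T = G (T :&: P)) -> S \in Wmin G -> S \subset P.
Proof.
move=> GP; rewrite inE => /andP [GS /forall_inP minS].
apply/subsetP => i iS; apply/negPn/negP => iNP.
have SiP : (S :\ i) :&: P = S :&: P.
  apply/setP => j; rewrite !inE.
  by case: eqVneq => // ->; rewrite (negbTE iNP) !andbF.
by have := minS i iS; rewrite GP SiP -GP GS.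
Qed.

Definition wvg n (w : 'I_n -> nat) (q : nat) : game n :=
  [ffun S : {set 'I_n} => q <= \sum_(i in S) w i].

Lemma cwvg_wvg (R : realFieldType) n (w : 'I_n -> nat) q :
  (forall i j : 'I_n, j = i.+1 :> nat -> w j <= w i) -> cwvg R (wvg w q).
Proof.
move=> w_noninc; split.
  exists q%:R%R, (fun i => (w i)%:R%R); split; first exact: ler0n.
  split=> [i|S]; first exact: ler0n.
  by rewrite ffunE -natr_sum ler_nat.
move=> i j ji S iS jS; rewrite !ffunE !big_setU1 //=; apply/implyP => win_j.
by apply: leq_trans win_j _; rewrite leq_add2r w_noninc.
Qed.

Section FourPlayers.
Variable m : nat.
Local Notation n := m.+4.

Definition player k : 'I_n := inord k.

Definition core : {set 'I_n} := [set player 0; player 1; player 2; player 3].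

Lemma player_eq i j : i < n -> j < n -> (player i == player j) = (i == j).
Proof.
move=> ilt jlt; apply/eqP/eqP => [eq_ij|->//].
by rewrite -(inordK ilt) -(inordK jlt) -/(player i) eq_ij.
Qed.

Definition on_core (F : bool -> bool -> bool -> bool -> bool) (S : {set 'I_n}) :=
  F (player 0 \in S) (player 1 \in S) (player 2 \in S) (player 3 \in S).

Definition coalition (t0 t1 t2 t3 : bool) : {set 'I_n} :=
  [set i | [|| t0 && (i == player 0), t1 && (i == player 1),
               t2 && (i == player 2) | t3 && (i == player 3)]].

Lemma coalition_sub t0 t1 t2 t3 : coalition t0 t1 t2 t3 \subset core.
Proof.
apply/subsetP => i; rewrite !inE.
by case/or4P => /andP [_ ->]; rewrite ?orbT.
Qed.

Lemma on_core_coalition F t0 t1 t2 t3 :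
  on_core F (coalition t0 t1 t2 t3) = F t0 t1 t2 t3.
Proof. by rewrite /on_core !inE !player_eq //= !andbF !andbT ?orbF. Qed.

Lemma eq_coalition (S : {set 'I_n}) t0 t1 t2 t3 : S \subset core ->
  (S == coalition t0 t1 t2 t3) =
  [&& (player 0 \in S) == t0, (player 1 \in S) == t1,
      (player 2 \in S) == t2 & (player 3 \in S) == t3].
Proof.
move=> Score; apply/eqP/and4P => [->|[/eqP S0 /eqP S1 /eqP S2 /eqP S3]].
  by rewrite !inE !player_eq //= !andbF !andbT ?orbF !eqxx.
apply/setP => i; have [icore|iNcore] := boolP (i \in core); last first.
  have notin (A : {set 'I_n}) : A \subset core -> (i \in A) = false.
    by move=> Acore; apply/negbTE; apply: contra iNcore; apply: subsetP.
  by rewrite !notin ?coalition_sub.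
by move: icore; rewrite !inE -!orbA => /or4P [] /eqP ->;
  rewrite !player_eq //= ?andbF ?andbT ?orbF.
Qed.

Definition minimal4 (F : bool -> bool -> bool -> bool -> bool) b0 b1 b2 b3 :=
  [&& F b0 b1 b2 b3, b0 ==> ~~ F false b1 b2 b3, b1 ==> ~~ F b0 false b2 b3,
      b2 ==> ~~ F b0 b1 false b3 & b3 ==> ~~ F b0 b1 b2 false].

Lemma Wmin_on_core (G : game n) F : (forall S, G S = on_core F S) ->
  forall S, (S \in Wmin G) = (S \subset core) && on_core (minimal4 F) S.
Proof.
move=> GF S; have [Score|SNcore] := boolP (S \subset core); last first.
  apply/negbTE; apply: contra SNcore; apply: Wmin_sub_support => T.
  by rewrite !GF /on_core !inE !player_eq //= !andbT.
rewrite inE GF /on_core /minimal4; congr (_ && _); rewrite -/(on_core F S).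
apply/forall_inP/and4P => [minS|[min0 min1 min2 min3] i iS].
  by split; apply/implyP => /minS; rewrite GF /on_core !in_setD1 !player_eq.
move: (subsetP Score i iS); rewrite !inE -!orbA => /or4P [] /eqP i_eq;
  rewrite i_eq in iS *; rewrite GF /on_core !in_setD1 !player_eq //=.
- exact: implyP min0 iS.
- exact: implyP min1 iS.
- exact: implyP min2 iS.
- exact: implyP min3 iS.
Qed.

Lemma mwc_step_on_core (x y : game n) Fx Fy t0 t1 t2 t3 :
  (forall S, x S = on_core Fx S) -> (forall S, y S = on_core Fy S) ->
  (forall b0 b1 b2 b3, minimal4 Fy b0 b1 b2 b3 =
     [&& b0 == t0, b1 == t1, b2 == t2 & b3 == t3] || minimal4 Fx b0 b1 b2 b3) ->
  ~~ minimal4 Fx t0 t1 t2 t3 -> mwc_step x y.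
Proof.
move=> xF yF Fyx Fxt; apply: (@mwc_step_setU1 _ _ _ (coalition t0 t1 t2 t3)).
  by rewrite (Wmin_on_core xF) on_core_coalition (negbTE Fxt) andbF.
apply/setP => S; rewrite in_setU1 (Wmin_on_core yF) (Wmin_on_core xF).
have [Score|SNcore] := boolP (S \subset core).
  by rewrite /on_core Fyx eq_coalition.
by case: eqP => // S_eq; rewrite S_eq coalition_sub in SNcore.
Qed.

Definition weight4 (a b c d : nat) (i : 'I_n) : nat := nth 0 [:: a; b; c; d] i.

Definition quota4 (a b c d q : nat) (b0 b1 b2 b3 : bool) :=
  q <= b0 * a + b1 * b + b2 * c + b3 * d.

Lemma sum_weight4 a b c d (S : {set 'I_n}) :
  \sum_(i in S) weight4 a b c d i =
  (player 0 \in S) * a + (player 1 \in S) * b +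
  (player 2 \in S) * c + (player 3 \in S) * d.
Proof.
rewrite big_mkcond /=.
transitivity (\sum_(0 <= k < n) (player k \in S) * nth 0 [:: a; b; c; d] k).
  rewrite big_mkord; apply: eq_bigr => i _.
  by rewrite /player inord_val; case: (i \in S); rewrite ?mul1n ?mul0n.
by rewrite !big_nat_recl //= big1 => [|k _]; rewrite ?nth_nil ?muln0 // !addnA addn0.
Qed.

Lemma wvg_weight4E a b c d q S :
  wvg (weight4 a b c d) q S = on_core (quota4 a b c d q) S.
Proof. by rewrite ffunE sum_weight4. Qed.

Lemma cwvg_weight4 (R : realFieldType) a b c d q :
  d <= c -> c <= b -> b <= a -> cwvg R (wvg (weight4 a b c d) q).
Proof.
move=> dc cb ba; apply: cwvg_wvg => i j; rewrite /weight4 => ->.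
by case: (nat_of_ord i) => [|[|[|[|k]]]].
Qed.

End FourPlayers.

Theorem proposition3 (R : realFieldType) (n : nat) : 4 <= n ->
  exists (G x1 x2 : game n),
    cwvg R G /\ x1 <> x2 /\ covers R x1 G /\ covers R x2 G.
Proof.
case: n => [|[|[|[|m]]]] // _.
exists (wvg (weight4 2 1 1 1) 3), (wvg (weight4 3 1 1 1) 4),
       (wvg (weight4 3 2 2 1) 5).
split; first exact: cwvg_weight4.
split.
  move/(congr1 (fun x : game m.+4 => x (coalition m true false false true))).
  by rewrite !wvg_weight4E !on_core_coalition.
split; apply: covers_of_mwc_step; try exact: cwvg_weight4.
- apply: (@mwc_step_on_core _ _ _ _ _ false true true true)
    (wvg_weight4E _ _ _ _ _) (wvg_weight4E _ _ _ _ _) _ _ => //.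
  by do 4 case.
- apply: (@mwc_step_on_core _ _ _ _ _ true false false true)
    (wvg_weight4E _ _ _ _ _) (wvg_weight4E _ _ _ _ _) _ _ => //.
  by do 4 case.
Qed.
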